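(* Let $(X,d_X)$ be a compact metric space and $\{U_i\}_{i=1}^N$ a finite open cover of $X$. Suppose that for each $i$ there are a map $f_i:U_i\to X$ and constants $L_i>1$, $\alpha_i\ge1$, $C_i>0$ such that for all $x,y,z\in U_i$ with $x\ne y$, $x\ne z$: (1) $d_X(f_i(x),f_i(y))\ge L_i\,d_X(x,y)$; (2) $\frac{d_X(f_i(x),f_i(y))}{d_X(x,y)}-\frac{d_X(f_i(x),f_i(z))}{d_X(x,z)}\le C_i\operatorname{diam}(\{x,y,z\})^{\alpha_i}$. Then $X$ is quasi-self-similar.
   Context: A metric space $X$ is ($H$-)quasi-self-similar if there exist $r_0>0$ and $H\ge1$ such that for every ball $B$ of radius $r<r_0$ there is a map $f_B:B\to X$ with $\frac1H\frac{r_0}{r}d_X(x,y)\le d_X(f_B(x),f_B(y))\le H\frac{r_0}{r}d_X(x,y)$ for all $x,y\in B$. *)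

From Stdlib Require Import Reals List.
Open Scope R_scope.

Definition is_metric {T : Type} (d : T -> T -> R) : Prop :=
  (forall x y, 0 <= d x y) /\
  (forall x y, d x y = 0 <-> x = y) /\
  (forall x y, d x y = d y x) /\
  (forall x y z, d x z <= d x y + d y z).

Definition metric_open {T : Type} (d : T -> T -> R) (U : T -> Prop) : Prop :=
  forall x, U x -> exists e, 0 < e /\ forall y, d x y < e -> U y.

Definition compact_space {T : Type} (d : T -> T -> R) : Prop :=
  forall (I : Type) (V : I -> T -> Prop),
    (forall i, metric_open d (V i)) ->
    (forall x, exists i, V i x) ->
    exists l : list I, forall x, exists i, In i l /\ V i x.

Definition mball {T : Type} (d : T -> T -> R) (c : T) (r : R) (x : T) : Prop :=
  d c x < r.

Definition diam3 {T : Type} (d : T -> T -> R) (x y z : T) : R :=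
  Rmax (d x y) (Rmax (d x z) (d y z)).

Definition quasi_self_similar {T : Type} (d : T -> T -> R) : Prop :=
  exists r0 H : R, 0 < r0 /\ 1 <= H /\
    forall (c : T) (r : R), 0 < r -> r < r0 ->
      exists fB : T -> T,
        forall x y, mball d c r x -> mball d c r y ->
          (1 / H) * (r0 / r) * d x y <= d (fB x) (fB y) /\
          d (fB x) (fB y) <= H * (r0 / r) * d x y.

From Stdlib Require Import Reals List Lra Lia Classical.
Import ListNotations.
Open Scope R_scope.

(** The ratio [stretch (f i) x y = d(f_i x, f_i y) / d(x, y)] is at least
    [L_i > 1], and hypothesis (2) makes it almost constant on small balls: on a
    ball of radius [rho] it oscillates by [O(rho)].  Starting from a small ball
    [B(c, r)], repeatedly apply the map [f_i] of a cover set containing a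
    Lebesgue-number neighbourhood of the current image.  Each step multiplies
    the scale [P] of the composite by a factor [lam >= min L_i] and its
    distortion by [1 + O(P r)]; since the scales [P r] grow geometrically, the
    total distortion stays bounded by [4].  Stop as soon as [P r] exceeds a fixed
    threshold [theta]: then [P r <= Lam theta], where [Lam] is a uniform bound on
    the stretch over small balls, which compactness provides. *)

Definition stretch {T : Type} (d : T -> T -> R) (g : T -> T) (x y : T) : R :=
  d (g x) (g y) / d x y.

Definition scaled_on {T : Type} (d : T -> T -> R) (V : T -> Prop)
    (g : T -> T) (P b : R) : Prop :=
  forall x y, V x -> V y ->
    P * d x y <= b * d (g x) (g y) /\ d (g x) (g y) <= b * P * d x y.

Lemma Rpower_le_self t a : 0 < t -> t <= 1 -> 1 <= a -> Rpower t a <= t.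
Proof.
  intros Ht Ht1 Ha.
  replace a with (1 + (a - 1)) by ring.
  rewrite Rpower_plus, Rpower_1 by lra.
  assert (Hle : Rpower t (a - 1) <= Rpower 1 (a - 1)) by (apply Rle_Rpower_l; lra).
  replace (Rpower 1 (a - 1)) with 1 in Hle
    by (unfold Rpower; now rewrite ln_1, Rmult_0_r, exp_0).
  assert (0 < Rpower t (a - 1)) by apply exp_pos.
  nra.
Qed.

Lemma distortion_step Lm lam kappa s b :
  1 < Lm -> Lm <= lam -> 0 <= kappa -> 0 <= s ->
  2 * kappa / (Lm - 1) * s <= 1 -> 1 <= b -> b <= 1 + 2 * kappa / (Lm - 1) * s ->
  b * (1 + kappa * s) <= 1 + 2 * kappa / (Lm - 1) * (lam * s).
Proof.
  intros HLm Hlam Hk Hs Hcs Hb1 Hb.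
  set (c := 2 * kappa / (Lm - 1)) in *.
  assert (Hc : c * (Lm - 1) = 2 * kappa) by (unfold c; field; lra).
  assert (Hc0 : 0 <= c) by (unfold c; apply Rle_mult_inv_pos; lra).
  assert (b * (1 + kappa * s) <= (1 + c * s) * (1 + kappa * s))
    by (apply Rmult_le_compat_r; nra).
  assert (c * s * (kappa * s) <= 1 * (kappa * s))
    by (apply Rmult_le_compat_r; [apply Rmult_le_pos |]; lra).
  assert (c * (Lm * s) <= c * (lam * s))
    by (apply Rmult_le_compat_l; [lra | apply Rmult_le_compat_r; lra]).
  nra.
Qed.

Lemma list_upper_bound {A : Type} (P : A -> R -> Prop) (l : list A) :
  (forall a x y, P a x -> x <= y -> P a y) ->
  (forall a, In a l -> exists x, P a x) ->
  exists x, forall a, In a l -> P a x.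
Proof.
  intros Hmono. induction l as [|a l IH]; intros Hex.
  - exists 0. intros ? [].
  - destruct (Hex a (or_introl eq_refl)) as [x Hx].
    destruct IH as [y Hy]; [intros b Hb; apply Hex; now right|].
    exists (Rmax x y). intros b [<-|Hb].
    + apply Hmono with x; [exact Hx | apply Rmax_l].
    + apply Hmono with y; [now apply Hy | apply Rmax_r].
Qed.

Lemma list_lower_bound_pos {A : Type} (h : A -> R) (l : list A) :
  (forall a, In a l -> 0 < h a) ->
  exists m, 0 < m /\ forall a, In a l -> m <= h a.
Proof.
  induction l as [|a l IH]; intros Hpos.
  - exists 1. split; [lra | intros ? []].
  - destruct IH as [m [Hm Hmin]]; [intros b Hb; apply Hpos; now right|].
    exists (Rmin (h a) m). split.
    + apply Rmin_pos; [apply Hpos; now left | exact Hm].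
    + intros b [<-|Hb]; [apply Rmin_l|].
      eapply Rle_trans; [apply Rmin_r | now apply Hmin].
Qed.

Section Metric.

Context {T : Type} {d : T -> T -> R}.
Hypothesis Hd : is_metric d.

Lemma dist_ge0 x y : 0 <= d x y.
Proof. apply Hd. Qed.

Lemma dist_refl x : d x x = 0.
Proof. now apply Hd. Qed.

Lemma dist_sym x y : d x y = d y x.
Proof. apply Hd. Qed.

Lemma dist_triangle x y z : d x z <= d x y + d y z.
Proof. apply Hd. Qed.

Lemma dist_pos x y : x <> y -> 0 < d x y.
Proof.
  intros Hxy. destruct (dist_ge0 x y) as [|E]; [assumption|].
  exfalso. apply Hxy, Hd. now symmetry.
Qed.

Lemma dist_lt_twice c x y rho : d c x < rho -> d c y < rho -> d x y < 2 * rho.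
Proof.
  intros Hx Hy. pose proof (dist_triangle x c y). rewrite (dist_sym x c) in *. lra.
Qed.

Lemma diam3_le_twice c x y z rho :
  d c x < rho -> d c y < rho -> d c z < rho -> diam3 d x y z <= 2 * rho.
Proof.
  intros Hx Hy Hz. unfold diam3.
  pose proof (dist_lt_twice c x y rho Hx Hy).
  pose proof (dist_lt_twice c x z rho Hx Hz).
  pose proof (dist_lt_twice c y z rho Hy Hz).
  repeat apply Rmax_lub; lra.
Qed.

Lemma diam3_pos x y z : x <> y -> 0 < diam3 d x y z.
Proof.
  intros Hxy. unfold diam3.
  eapply Rlt_le_trans; [apply (dist_pos _ _ Hxy) | apply Rmax_l].
Qed.

Lemma mball_open c r : metric_open d (mball d c r).
Proof.
  intros x Hx. unfold mball in *. exists (r - d c x). split; [lra|].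
  intros y Hy. pose proof (dist_triangle c x y). lra.
Qed.

Lemma compact_net :
  compact_space d -> forall eps, 0 < eps ->
  exists l, forall x, exists c, In c l /\ d c x < eps.
Proof.
  intros Hc eps Heps.
  destruct (Hc T (fun c => mball d c eps)) as [l Hl].
  - intros c. apply mball_open.
  - intros x. exists x. unfold mball. now rewrite dist_refl.
  - now exists l.
Qed.

Lemma compact_bounded (x0 : T) :
  compact_space d -> exists D, forall x y, d x y <= D.
Proof.
  intros Hc. destruct (compact_net Hc 1 Rlt_0_1) as [l Hl].
  destruct (list_upper_bound (fun c M => d x0 c <= M) l) as [M HM].
  - intros; lra.
  - intros c _. now exists (d x0 c).
  - assert (Hx0 : forall x, d x0 x <= M + 1).
    { intros x. destruct (Hl x) as [c [Hin Hcx]].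
      pose proof (HM c Hin). pose proof (dist_triangle x0 c x). lra. }
    exists (2 * (M + 1)). intros x y.
    pose proof (Hx0 x). pose proof (Hx0 y).
    pose proof (dist_triangle x x0 y). rewrite (dist_sym x x0) in *. lra.
Qed.

Lemma lebesgue_number {I : Type} (U : I -> T -> Prop) :
  compact_space d -> (forall i, metric_open d (U i)) -> (forall x, exists i, U i x) ->
  exists delta, 0 < delta /\
    forall x, exists i, forall y, d x y < delta -> U i y.
Proof.
  intros Hc HU Hcov.
  set (J := {p : T * R | 0 < snd p /\
              exists i, forall y, d (fst p) y < 2 * snd p -> U i y}).
  destruct (Hc J (fun p => mball d (fst (proj1_sig p)) (snd (proj1_sig p))))
    as [l Hl].
  - intros p. apply mball_open.
  - intros x. destruct (Hcov x) as [i Hx]. destruct (HU i x Hx) as [e [He Hball]].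
    unshelve eexists (exist _ (x, e / 2) _).
    + split; [simpl; lra|]. exists i. intros y Hy. apply Hball. simpl in Hy. lra.
    + unfold mball. simpl. rewrite dist_refl. lra.
  - destruct (list_lower_bound_pos (fun p : J => snd (proj1_sig p)) l)
      as [m [Hm Hmin]].
    { intros p _. apply (proj2_sig p). }
    exists m. split; [exact Hm|]. intros x.
    destruct (Hl x) as [[[z e] [He [i Hi]]] [Hin Hzx]].
    specialize (Hmin _ Hin). unfold mball in Hzx. simpl in *.
    exists i. intros y Hy. apply Hi. pose proof (dist_triangle z x y). lra.
Qed.

Lemma stretch_sym g x y : stretch d g x y = stretch d g y x.
Proof. unfold stretch. now rewrite (dist_sym x y), (dist_sym (g x) (g y)). Qed.

Lemma stretch_oscillation (g : T -> T) (V : T -> Prop) e :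
  (forall x y z, V x -> V y -> V z -> x <> y -> x <> z ->
     stretch d g x y - stretch d g x z <= e) ->
  forall x y x' y', V x -> V y -> V x' -> V y' -> x <> y -> x' <> y' ->
    stretch d g x y <= stretch d g x' y' + 2 * e.
Proof.
  intros Hosc x y x' y' Hx Hy Hx' Hy' Hxy Hx'y'.
  destruct (classic (x = x')) as [<-|Hxx'].
  - pose proof (Hosc x y y' Hx Hy Hy' Hxy Hx'y').
    assert (0 <= e) by (pose proof (Hosc x y y Hx Hy Hy Hxy Hxy); lra).
    lra.
  - pose proof (Hosc x y x' Hx Hy Hx' Hxy Hxx').
    pose proof (Hosc x' x y' Hx' Hx Hy' (not_eq_sym Hxx') Hx'y').
    rewrite (stretch_sym g x x') in *. lra.
Qed.

Lemma scaled_on_id V : scaled_on d V (fun x => x) 1 1.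
Proof. intros x y _ _. lra. Qed.

Lemma scaled_on_weaken V g P b b' :
  0 <= P -> b <= b' -> scaled_on d V g P b -> scaled_on d V g P b'.
Proof.
  intros HP Hb Hg x y Hx Hy. destruct (Hg x y Hx Hy) as [Hlo Hhi].
  pose proof (dist_ge0 (g x) (g y)).
  assert (0 <= P * d x y) by (apply Rmult_le_pos; [assumption | apply dist_ge0]).
  split; nra.
Qed.

Lemma scaled_on_dist_pos V g P b x y :
  0 < P -> scaled_on d V g P b -> V x -> V y -> x <> y -> 0 < d (g x) (g y).
Proof.
  intros HP Hg Hx Hy Hxy. destruct (Hg x y Hx Hy) as [Hlo _].
  pose proof (dist_pos x y Hxy). pose proof (dist_ge0 (g x) (g y)).
  destruct (Rle_lt_or_eq_dec 0 _ (dist_ge0 (g x) (g y))) as [|E]; [assumption|].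
  rewrite <- E in Hlo. nra.
Qed.

Lemma scaled_on_ball_image c r g P b x :
  0 < r -> 0 < P -> b <= 2 ->
  scaled_on d (mball d c r) g P b -> mball d c r x -> d (g c) (g x) < 2 * (P * r).
Proof.
  intros Hr HP Hb Hg Hx.
  assert (Hc : mball d c r c) by (unfold mball; rewrite dist_refl; exact Hr).
  destruct (Hg c x Hc Hx) as [_ Hhi]. unfold mball in Hx.
  pose proof (dist_ge0 c x). pose proof (dist_ge0 (g c) (g x)).
  assert (P * d c x < P * r) by (apply Rmult_lt_compat_l; assumption).
  assert (b * (P * d c x) <= 2 * (P * d c x)) by (apply Rmult_le_compat_r; nra).
  lra.
Qed.

Lemma scaled_on_comp V g F P b lam e :
  0 < P -> 0 <= b -> 0 <= lam -> 0 <= e -> scaled_on d V g P b ->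
  (forall x y, V x -> V y -> x <> y ->
     stretch d F (g x) (g y) <= lam * (1 + e) /\
     lam <= stretch d F (g x) (g y) * (1 + e)) ->
  scaled_on d V (fun x => F (g x)) (lam * P) (b * (1 + e)).
Proof.
  intros HP Hb Hlam He Hg Hnear x y Hx Hy.
  destruct (classic (x = y)) as [<-|Hxy].
  { rewrite !dist_refl. lra. }
  destruct (Hg x y Hx Hy) as [Hlo Hhi]. destruct (Hnear x y Hx Hy Hxy) as [Hup Hdown].
  pose proof (scaled_on_dist_pos V g P b x y HP Hg Hx Hy Hxy) as HG.
  pose proof (dist_ge0 x y).
  unfold stretch in *.
  set (G := d (g x) (g y)) in *. set (FG := d (F (g x)) (F (g y))) in *.
  set (s := FG / G) in *.
  assert (HFG : FG = s * G) by (unfold s; field; lra).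
  assert (Hs : 0 <= s) by (apply Rle_mult_inv_pos; [apply dist_ge0 | exact HG]).
  rewrite HFG. split.
  - assert (lam * (P * d x y) <= lam * (b * G)) by (apply Rmult_le_compat_l; lra).
    assert (lam * (b * G) <= s * (1 + e) * (b * G)) by (apply Rmult_le_compat_r; nra).
    nra.
  - assert (s * G <= lam * (1 + e) * G) by (apply Rmult_le_compat_r; lra).
    assert (lam * (1 + e) * G <= lam * (1 + e) * (b * P * d x y))
      by (apply Rmult_le_compat_l; nra).
    nra.
Qed.

Lemma uniform_expansion_constants N (U : nat -> T -> Prop) (f : nat -> T -> T)
    (L alpha C : nat -> R) :
  (forall i, (i < N)%nat -> 1 < L i /\ 1 <= alpha i /\ 0 < C i) ->
  (forall i, (i < N)%nat -> forall x y z : T,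
      U i x -> U i y -> U i z -> x <> y -> x <> z ->
      d (f i x) (f i y) >= L i * d x y /\
      d (f i x) (f i y) / d x y - d (f i x) (f i z) / d x z
        <= C i * Rpower (diam3 d x y z) (alpha i)) ->
  exists Lm K, 1 < Lm /\ 0 < K /\
    (forall i x y, (i < N)%nat -> U i x -> U i y -> x <> y ->
       Lm <= stretch d (f i) x y) /\
    (forall i x y z, (i < N)%nat -> U i x -> U i y -> U i z -> x <> y -> x <> z ->
       diam3 d x y z <= 1 ->
       stretch d (f i) x y - stretch d (f i) x z <= K * diam3 d x y z).
Proof.
  intros Hconst Hmap.
  destruct (list_lower_bound_pos (fun i => L i - 1) (seq 0 N)) as [m [Hm Hmin]].
  { intros i Hi. apply in_seq in Hi. destruct (Hconst i ltac:(lia)). lra. }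
  destruct (list_upper_bound (fun i K => C i <= K) (seq 0 N)) as [K HK].
  { intros; lra. } { intros i _. now exists (C i). }
  exists (1 + m), (Rmax 1 K). repeat split.
  - lra.
  - apply Rlt_le_trans with 1; [lra | apply Rmax_l].
  - intros i x y Hi Ux Uy Hxy.
    destruct (Hmap i Hi x y y Ux Uy Uy Hxy Hxy) as [Hexp _].
    specialize (Hmin i ltac:(apply in_seq; lia)). simpl in Hmin.
    pose proof (dist_pos x y Hxy).
    unfold stretch. apply Rmult_le_reg_r with (d x y); [assumption|].
    unfold Rdiv. rewrite Rmult_assoc, Rinv_l by lra. nra.
  - intros i x y z Hi Ux Uy Uz Hxy Hxz Hdiam.
    destruct (Hmap i Hi x y z Ux Uy Uz Hxy Hxz) as [_ Hreg].
    destruct (Hconst i Hi) as (_ & Halpha & HC).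
    pose proof (Rpower_le_self _ _ (diam3_pos x y z Hxy) Hdiam Halpha).
    assert (0 < Rpower (diam3 d x y z) (alpha i)) by apply exp_pos.
    assert (C i <= Rmax 1 K).
    { eapply Rle_trans; [apply HK; apply in_seq; lia | apply Rmax_r]. }
    unfold stretch. nra.
Qed.

Lemma quasi_self_similar_of_rescalings theta Lam :
  0 < theta -> 1 <= Lam ->
  (forall c r x0 y0, 0 < r -> r < theta ->
     mball d c r x0 -> mball d c r y0 -> x0 <> y0 ->
     exists g P, (theta < P * r <= Lam * theta) /\ scaled_on d (mball d c r) g P 4) ->
  quasi_self_similar d.
Proof.
  intros Htheta HLam Hresc. exists theta, (4 * Lam).
  split; [exact Htheta|]. split; [lra|].
  intros c r Hr Hrt.
  destruct (classic (exists x0 y0, mball d c r x0 /\ mball d c r y0 /\ x0 <> y0))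
    as [(x0 & y0 & Hx0 & Hy0 & Hxy0)|Hsingle].
  2: { exists (fun x => x). intros x y Hx Hy.
       destruct (classic (x = y)) as [<-|Hxy]; [rewrite dist_refl; lra|].
       exfalso. apply Hsingle. now exists x, y. }
  destruct (Hresc c r x0 y0 Hr Hrt Hx0 Hy0 Hxy0) as (g & P & [HPlo HPhi] & Hg).
  exists g. intros x y Hx Hy. destruct (Hg x y Hx Hy) as [Hlo Hhi].
  pose proof (dist_ge0 x y).
  assert (Hscale : theta / r < P <= Lam * (theta / r)).
  { assert (Hr' : theta / r * r = theta) by (field; lra).
    split.
    - apply Rmult_lt_reg_r with r; lra.
    - apply Rmult_le_reg_r with r; [lra|]. rewrite Rmult_assoc, Hr'. lra. }
  assert (Hinv : 1 / (4 * Lam) * (theta / r) <= P / 4).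
  { apply Rmult_le_reg_l with (4 * Lam); [lra|].
    replace (4 * Lam * (1 / (4 * Lam) * (theta / r))) with (theta / r) by (field; lra).
    assert (0 < theta / r) by (apply Rdiv_lt_0_compat; lra).
    nra. }
  split.
  - apply Rle_trans with (P / 4 * d x y); [apply Rmult_le_compat_r|]; lra.
  - apply Rle_trans with (4 * P * d x y); [lra|].
    apply Rmult_le_compat_r; lra.
Qed.

End Metric.

Section Rescaling.

Context {T : Type} {d : T -> T -> R} {I : Type}
  {U : I -> T -> Prop} {f : I -> T -> T} {Lm K delta : R}.
Hypotheses (Hd : is_metric d) (Hc : compact_space d)
  (HLm : 1 < Lm) (HK : 0 < K) (Hdelta : 0 < delta).
Hypothesis Hleb : forall x, exists i, forall y, d x y < delta -> U i y.
Hypothesis Hexp : forall i x y, U i x -> U i y -> x <> y -> Lm <= stretch d (f i) x y.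
Hypothesis Hreg : forall i x y z, U i x -> U i y -> U i z -> x <> y -> x <> z ->
  diam3 d x y z <= 1 -> stretch d (f i) x y - stretch d (f i) x z <= K * diam3 d x y z.

Lemma stretch_near_const i c rho :
  0 < rho -> 2 * rho <= 1 -> (forall y, d c y < rho -> U i y) ->
  forall x y x' y', d c x < rho -> d c y < rho -> d c x' < rho -> d c y' < rho ->
    x <> y -> x' <> y' ->
    stretch d (f i) x y <= stretch d (f i) x' y' + 4 * K * rho.
Proof.
  intros Hrho Hrho1 HUi x y x' y' Hx Hy Hx' Hy' Hxy Hx'y'.
  replace (4 * K * rho) with (2 * (K * (2 * rho))) by ring.
  apply (stretch_oscillation Hd (f i) (fun z => d c z < rho)); try assumption.
  intros a b e Ha Hb He Hab Hae.
  pose proof (diam3_le_twice Hd c a b e rho Ha Hb He).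
  eapply Rle_trans; [apply Hreg; auto; lra|].
  apply Rmult_le_compat_l; lra.
Qed.

Lemma stretch_bound_at x rho :
  0 < rho -> 4 * rho <= 1 ->
  exists Lam, forall i p q, (forall y, d x y < 2 * rho -> U i y) ->
    d x p < 2 * rho -> d x q < 2 * rho -> p <> q -> stretch d (f i) p q <= Lam.
Proof.
  intros Hrho Hrho1.
  destruct (classic (exists z1 z2, d x z1 < 2 * rho /\ d x z2 < 2 * rho /\ z1 <> z2))
    as [[z1 [z2 [Hz1 [Hz2 Hz12]]]]|Hsingle].
  2: { exists 0. intros i p q _ Hp Hq Hpq. exfalso. apply Hsingle. now exists p, q. }
  destruct (compact_bounded Hd x Hc) as [D HD].
  set (eta := d z1 z2 / 2).
  assert (Heta : 0 < eta) by (pose proof (dist_pos Hd z1 z2 Hz12); unfold eta; lra).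
  exists (D / eta + K). intros i p q HUi Hp Hq Hpq.
  (* One of [z1], [z2] is at distance [>= eta] from [p], so the stretch from [p]
     towards it is at most [D / eta]; (2) transfers this bound to [q]. *)
  assert (Hfar : exists z, d x z < 2 * rho /\ eta <= d p z).
  { pose proof (dist_triangle Hd z1 p z2). rewrite (dist_sym Hd z1 p) in *.
    destruct (Rle_dec (d p z1) (d p z2)); [exists z2 | exists z1];
      unfold eta; split; auto; lra. }
  destruct Hfar as [z [Hz Hpz]].
  assert (Hpz0 : p <> z) by (intros <-; rewrite (dist_refl Hd) in Hpz; lra).
  pose proof (diam3_le_twice Hd x p q z (2 * rho) Hp Hq Hz).
  assert (Hfar_stretch : stretch d (f i) p z <= D / eta).
  { unfold stretch, Rdiv. apply Rmult_le_compat.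
    - apply dist_ge0, Hd.
    - left. apply Rinv_0_lt_compat. lra.
    - apply HD.
    - apply Rinv_le_contravar; assumption. }
  pose proof (Hreg i p q z (HUi p Hp) (HUi q Hq) (HUi z Hz) Hpq Hpz0 ltac:(lra)).
  assert (K * diam3 d p q z <= K * 1) by (apply Rmult_le_compat_l; lra).
  lra.
Qed.

Lemma stretch_bound rho :
  0 < rho -> 4 * rho <= 1 ->
  exists Lam, 1 <= Lam /\ forall i c p q, (forall y, d c y < 3 * rho -> U i y) ->
    d c p < rho -> d c q < rho -> p <> q -> stretch d (f i) p q <= Lam.
Proof.
  intros Hrho Hrho1.
  destruct (compact_net Hd Hc rho Hrho) as [l Hl].
  destruct (list_upper_bound (fun x Lam => forall i p q,
      (forall y, d x y < 2 * rho -> U i y) ->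
      d x p < 2 * rho -> d x q < 2 * rho -> p <> q -> stretch d (f i) p q <= Lam) l)
    as [Lam HLam].
  - intros x a b Ha Hab i p q HUi Hp Hq Hpq. specialize (Ha i p q HUi Hp Hq Hpq). lra.
  - intros x _. now apply stretch_bound_at.
  - exists (Rmax 1 Lam). split; [apply Rmax_l|].
    intros i c p q HUi Hp Hq Hpq.
    destruct (Hl c) as [x [Hin Hxc]].
    assert (Hnear : forall y, d c y < rho -> d x y < 2 * rho).
    { intros y Hy. pose proof (dist_triangle Hd x c y). lra. }
    eapply Rle_trans; [|apply Rmax_r].
    apply (HLam x Hin); auto.
    intros y Hy. apply HUi. pose proof (dist_triangle Hd c x y).
    rewrite (dist_sym Hd c x) in *. lra.
Qed.

Section Iteration.

Variables (theta Lam : R) (c : T) (r : R) (x0 y0 : T).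

(* One step adds a relative distortion [kappa (P r)]; as the scales [P r] grow
   by factors [>= Lm], the invariant [b <= 1 + c1 (P r)] absorbs all of them. *)
Let kappa := 8 * K / Lm.
Let c1 := 2 * kappa / (Lm - 1).

Hypotheses (Htheta : 0 < theta) (Htheta_delta : theta <= delta / 6)
  (Htheta_1 : theta <= 1 / 8) (Htheta_c1 : theta <= / c1)
  (Htheta_kappa : theta <= / kappa).
Hypothesis HLam : forall i c' p q, (forall y, d c' y < 6 * theta -> U i y) ->
  d c' p < 2 * theta -> d c' q < 2 * theta -> p <> q -> stretch d (f i) p q <= Lam.
Hypotheses (Hr : 0 < r) (Hr_theta : r < theta).
Hypotheses (Hx0 : mball d c r x0) (Hy0 : mball d c r y0) (Hxy0 : x0 <> y0).

Let kappa_pos : 0 < kappa.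
Proof. unfold kappa. apply Rdiv_lt_0_compat; lra. Qed.

Let c1_pos : 0 < c1.
Proof. unfold c1. apply Rdiv_lt_0_compat; [pose proof kappa_pos |]; lra. Qed.

Let mul_le_one_of_le_theta a s : 0 < a -> 0 <= s -> s <= theta -> theta <= / a -> a * s <= 1.
Proof.
  intros Ha Hs Hst Hta. rewrite <- (Rinv_r a) by lra.
  apply Rmult_le_compat_l; lra.
Qed.

Let growing (g : T -> T) (P b : R) : Prop :=
  0 < P /\ (1 <= b <= 1 + c1 * (P * r)) /\ P * r <= theta /\
  scaled_on d (mball d c r) g P b.

Let rescaled (g : T -> T) (P : R) : Prop :=
  (theta < P * r <= Lam * theta) /\ scaled_on d (mball d c r) g P 4.

Lemma near_similarity_step g P b :
  growing g P b -> exists i lam, Lm <= lam <= Lam /\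
    scaled_on d (mball d c r) (fun x => f i (g x)) (lam * P) (b * (1 + kappa * (P * r))).
Proof.
  intros (HP & [Hb1 Hb] & HPr & Hg).
  assert (HPr0 : 0 < P * r) by nra.
  pose proof (mul_le_one_of_le_theta c1 (P * r) c1_pos ltac:(lra) HPr Htheta_c1).
  set (rho := 2 * (P * r)).
  assert (Hrho : 0 < rho <= 2 * theta) by (unfold rho; lra).
  assert (Himg : forall x, mball d c r x -> d (g c) (g x) < rho)
    by (intros x Hx; apply (scaled_on_ball_image Hd c r g P b x); auto; lra).
  destruct (Hleb (g c)) as [i HUi].
  assert (HU6 : forall y, d (g c) y < 6 * theta -> U i y) by (intros; apply HUi; lra).
  assert (HUrho : forall y, d (g c) y < rho -> U i y)
    by (intros y Hy; apply HU6; lra).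
  assert (Hgneq : forall x y, mball d c r x -> mball d c r y -> x <> y -> g x <> g y).
  { intros x y Hx Hy Hxy E.
    pose proof (scaled_on_dist_pos Hd _ g P b x y HP Hg Hx Hy Hxy).
    rewrite E, (dist_refl Hd) in *. lra. }
  set (lam := stretch d (f i) (g x0) (g y0)).
  assert (Hlam : Lm <= lam) by (apply Hexp; auto).
  exists i, lam. split.
  { split; [exact Hlam|].
    apply (HLam i (g c)); auto;
      (eapply Rlt_le_trans; [apply Himg; assumption | apply Hrho]). }
  assert (0 <= kappa * (P * r)) by (apply Rmult_le_pos; lra).
  apply (scaled_on_comp Hd); try lra; [exact Hg|].
  intros x y Hx Hy Hxy.
  assert (Hs : Lm <= stretch d (f i) (g x) (g y)) by (apply Hexp; auto).
  (* Since every stretch is [>= Lm], the oscillation [4 K rho = kappa (P r) Lm]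
     is a relative error of at most [kappa (P r)]. *)
  assert (Herr : 4 * K * rho = kappa * (P * r) * Lm) by (unfold rho, kappa; field; lra).
  pose proof (stretch_near_const i (g c) rho ltac:(lra) ltac:(lra) HUrho
    (g x) (g y) (g x0) (g y0) (Himg x Hx) (Himg y Hy) (Himg x0 Hx0) (Himg y0 Hy0)
    (Hgneq x y Hx Hy Hxy) (Hgneq x0 y0 Hx0 Hy0 Hxy0)) as Hup.
  pose proof (stretch_near_const i (g c) rho ltac:(lra) ltac:(lra) HUrho
    (g x0) (g y0) (g x) (g y) (Himg x0 Hx0) (Himg y0 Hy0) (Himg x Hx) (Himg y Hy)
    (Hgneq x0 y0 Hx0 Hy0 Hxy0) (Hgneq x y Hx Hy Hxy)) as Hdown.
  fold lam in Hup, Hdown.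
  assert (kappa * (P * r) * Lm <= kappa * (P * r) * lam) by (apply Rmult_le_compat_l; nra).
  assert (kappa * (P * r) * Lm <= kappa * (P * r) * stretch d (f i) (g x) (g y))
    by (apply Rmult_le_compat_l; nra).
  split; nra.
Qed.

Lemma rescaling_step g P b :
  growing g P b ->
  (exists g' P' b', growing g' P' b' /\ Lm * P <= P') \/ (exists g' P', rescaled g' P').
Proof.
  intros Hgrow. pose proof Hgrow as (HP & [Hb1 Hb] & HPr & _).
  destruct (near_similarity_step g P b Hgrow) as (i & lam & [Hlam HLam_ge] & Hscaled).
  assert (HPr0 : 0 <= P * r) by (apply Rmult_le_pos; lra).
  pose proof (mul_le_one_of_le_theta c1 (P * r) c1_pos HPr0 HPr Htheta_c1) as Hc1Pr.
  pose proof (mul_le_one_of_le_theta kappa (P * r) kappa_pos HPr0 HPr Htheta_kappa) as HkPr.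
  assert (0 <= kappa * (P * r)) by (apply Rmult_le_pos; lra).
  set (eps := kappa * (P * r)) in *.
  destruct (Rle_dec (lam * P * r) theta) as [Hsmall|Hlarge].
  - left. exists (fun x => f i (g x)), (lam * P), (b * (1 + eps)).
    split; [|apply Rmult_le_compat_r; lra].
    refine (conj _ (conj (conj _ _) (conj _ Hscaled))); [nra | nra | | lra].
    rewrite Rmult_assoc. apply distortion_step; try exact Hc1Pr; try exact Hb; lra.
  - right. exists (fun x => f i (g x)), (lam * P). split; [split|].
    + lra.
    + rewrite Rmult_assoc. apply Rmult_le_compat; lra.
    + apply (scaled_on_weaken Hd _ _ _ (b * (1 + eps))); [nra | | exact Hscaled].
      replace 4 with (2 * 2) by ring. apply Rmult_le_compat; lra.
Qed.

Lemma rescaling_iterate k :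
  (exists g P b, growing g P b /\ Lm ^ k <= P) \/ (exists g P, rescaled g P).
Proof.
  induction k as [|k [(g & P & b & Hgrow & Hk)|Hdone]].
  - left. exists (fun x => x), 1, 1. split; [|simpl; lra].
    refine (conj _ (conj (conj _ _) (conj _ (scaled_on_id _)))); try lra.
    pose proof c1_pos. nra.
  - destruct (rescaling_step g P b Hgrow) as [(g' & P' & b' & Hgrow' & HP')|Hdone].
    + left. exists g', P', b'. split; [exact Hgrow'|]. simpl.
      assert (0 < Lm) by lra. nra.
    + now right.
  - now right.
Qed.

Lemma small_ball_rescaling :
  exists g P, (theta < P * r <= Lam * theta) /\ scaled_on d (mball d c r) g P 4.
Proof.
  destruct (Pow_x_infinity Lm) with (b := theta / r + 1) as [k Hk].
  { rewrite Rabs_pos_eq; lra. }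
  specialize (Hk k (le_n k)). rewrite Rabs_pos_eq in Hk by (apply pow_le; lra).
  destruct (rescaling_iterate k) as [(g & P & b & (_ & _ & HPr & _) & HkP)|Hdone];
    [|exact Hdone].
  exfalso.
  assert (theta / r * r < P * r) by (apply Rmult_lt_compat_r; lra).
  replace (theta / r * r) with theta in * by (field; lra). lra.
Qed.

End Iteration.

Lemma small_scale_rescaling :
  exists theta Lam, 0 < theta /\ 1 <= Lam /\
    forall c r x0 y0, 0 < r -> r < theta ->
      mball d c r x0 -> mball d c r y0 -> x0 <> y0 ->
      exists g P, (theta < P * r <= Lam * theta) /\ scaled_on d (mball d c r) g P 4.
Proof.
  set (kappa := 8 * K / Lm). set (c1 := 2 * kappa / (Lm - 1)).
  assert (Hkappa : 0 < kappa) by (apply Rdiv_lt_0_compat; lra).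
  assert (Hc1 : 0 < c1) by (apply Rdiv_lt_0_compat; lra).
  destruct (list_lower_bound_pos (fun a => a) [delta / 6; 1 / 8; / c1; / kappa])
    as [theta [Htheta Hmin]].
  { intros a Ha. simpl in Ha.
    repeat destruct Ha as [<-|Ha]; try lra; now apply Rinv_0_lt_compat. }
  destruct (stretch_bound (2 * theta)) as [Lam [HLam1 HLam]]; [lra | |].
  { assert (theta <= 1 / 8) by (apply Hmin; simpl; tauto). lra. }
  exists theta, Lam. split; [exact Htheta|]. split; [exact HLam1|].
  intros c r x0 y0 Hr Hrt Hx0 Hy0 Hxy0.
  apply (small_ball_rescaling theta Lam c r x0 y0); try (apply Hmin; simpl; tauto);
    try assumption.
  intros i c' p q HUi. apply HLam. intros y Hy. apply HUi. lra.
Qed.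

End Rescaling.

Theorem theorem6p1 (T : Type) (d : T -> T -> R)
  (N : nat) (U : nat -> T -> Prop) (f : nat -> T -> T)
  (L alpha C : nat -> R) :
  is_metric d ->
  compact_space d ->
  (forall i, (i < N)%nat -> metric_open d (U i)) ->
  (forall x : T, exists i, (i < N)%nat /\ U i x) ->
  (forall i, (i < N)%nat -> 1 < L i /\ 1 <= alpha i /\ 0 < C i) ->
  (forall i, (i < N)%nat -> forall x y z : T,
      U i x -> U i y -> U i z -> x <> y -> x <> z ->
      d (f i x) (f i y) >= L i * d x y /\
      d (f i x) (f i y) / d x y - d (f i x) (f i z) / d x z
        <= C i * Rpower (diam3 d x y z) (alpha i)) ->
  quasi_self_similar d.
Proof.
  intros Hd Hc HU Hcov Hconst Hmap.
  destruct (uniform_expansion_constants Hd N U f L alpha C Hconst Hmap)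
    as (Lm & K & HLm & HK & Hexp & Hreg).
  set (V i y := (i < N)%nat /\ U i y).
  destruct (lebesgue_number Hd V Hc) as (delta & Hdelta & Hleb).
  - intros i y [Hi Hy]. destruct (HU i Hi y Hy) as [e [He Hball]].
    exists e. split; [exact He|]. intros z Hz. split; [exact Hi | now apply Hball].
  - intros x. destruct (Hcov x) as [i Hx]. now exists i.
  - destruct (small_scale_rescaling (U := V) (f := f) Hd Hc HLm HK Hdelta Hleb)
      as (theta & Lam & Htheta & HLam & Hresc).
    + intros i x y [Hi Hx] [_ Hy]. now apply Hexp.
    + intros i x y z [Hi Hx] [_ Hy] [_ Hz]. now apply Hreg.
    + exact (quasi_self_similar_of_rescalings Hd theta Lam Htheta HLam Hresc).
Qed.
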